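(* Consider the uplink system described in the context and suppose $L_u=1$ for all $u\in\{1,\dots,U\}$. Let $C^*$ be the optimal value of $$\max\ \log\Big|\sum_{u=1}^U \mathbf G_u(\mathbf w_u)\mathbf Q_u\mathbf G_u^H(\mathbf w_u)+\mathbf I_M\Big|$$ over $\mathbf Q_u\succeq\mathbf 0$, $\mathrm{tr}(\mathbf Q_u)\le P_u$, $0\le w_{u,n}\le W_u$, $w_{u,n}\ne w_{u,n'}$ ($n\ne n'$), $u=1,\dots,U$, and let $C^{\mathrm{ub}*}$ be the optimal value of $$\max\ \log\Big|\sum_{u=1}^U MN_u\mathbf A_{u,\mathrm R}\boldsymbol\Gamma_u\tilde{\mathbf Q}_u\boldsymbol\Gamma_u^H\mathbf A_{u,\mathrm R}^H+\mathbf I_M\Big|$$ over $\tilde{\mathbf Q}_u\in\mathbb C^{L_u\times L_u}$, $\tilde{\mathbf Q}_u\succeq\mathbf 0$, $\mathrm{tr}(\tilde{\mathbf Q}_u)\le L_uP_u$. Then $$C^*=C^{\mathrm{ub}*}=\log\Big|\sum_{u=1}^U MN_uP_u|\gamma_{u,1}|^2\mathbf a_{u,\mathrm R}(\beta_{u,1})\mathbf a_{u,\mathrm R}^H(\beta_{u,1})+\mathbf I_M\Big|.$$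
   Context: A base station (BS) has an $M$-antenna uniform linear array with spacing $d=\lambda/2$ ($\lambda$ the wavelength). User $u\in\{1,\dots,U\}$ has $N_u$ antennas at positions $w_{u,1},\dots,w_{u,N_u}\in[0,W_u]$ on a line, power budget $P_u>0$, and $L_u$ propagation paths to the BS with complex gains $\gamma_{u,l}$, angles of arrival $\beta_{u,l}\in[0,\pi]$ and angles of departure $\theta_{u,l}\in[0,\pi]$. Define $\mathbf a_{u,\mathrm R}(\beta)=\frac1{\sqrt M}[1,e^{-j\frac{2\pi}{\lambda}d\cos\beta},\dots,e^{-j\frac{2\pi}{\lambda}(M-1)d\cos\beta}]^T$, $\mathbf a_{u,\mathrm T}(\theta,\mathbf w_u)=\frac1{\sqrt{N_u}}[e^{-j\frac{2\pi}{\lambda}w_{u,1}\cos\theta},\dots,e^{-j\frac{2\pi}{\lambda}w_{u,N_u}\cos\theta}]^T$, $\boldsymbol\Gamma_u=\mathrm{diag}(\gamma_{u,1},\dots,\gamma_{u,L_u})$, $\mathbf A_{u,\mathrm R}=[\mathbf a_{u,\mathrm R}(\beta_{u,l})]_{l=1}^{L_u}$, $\mathbf A_{u,\mathrm T}(\mathbf w_u)=[\mathbf a_{u,\mathrm T}(\theta_{u,l},\mathbf w_u)]_{l=1}^{L_u}$, and the channel $\mathbf G_u(\mathbf w_u)=\sqrt{MN_u}\,\mathbf A_{u,\mathrm R}\boldsymbol\Gamma_u\mathbf A_{u,\mathrm T}^H(\mathbf w_u)$. $|\cdot|$ denotes determinant. *)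

From mathcomp Require Import all_boot all_order all_algebra.
From mathcomp Require Import all_classical all_reals all_analysis.
From mathcomp Require Import complex.
Set Implicit Arguments. Unset Strict Implicit. Unset Printing Implicit Defensive.
Import GRing.Theory Num.Theory.
Local Open Scope ring_scope.
Local Open Scope complex_scope.

Section Channel.
Variable R : realType.
Local Notation C := R[i].

Definition expj (x : R) : C := (cos x +i* sin x).

Definition rC (x : R) : C := x%:C.

Definition hermT m n (A : 'M[C]_(m, n)) : 'M[C]_(n, m) := (map_mx Num.conj A)^T.

Definition psd n (Q : 'M[C]_n) : Prop :=
  Q = hermT Q /\ forall x : 'cV[C]_n, 0 <= (hermT x *m Q *m x) 0 0.

(* log |X| for a Hermitian matrix X (its determinant is real) *)
Definition logdet n (X : 'M[C]_n) : R := ln (complex.Re (\det X)).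

(* receive steering vector a_R(beta) of an M-element ULA with spacing d *)
Definition aR (lambda d : R) (M : nat) (beta : R) : 'cV[C]_M :=
  \col_(m < M) (rC (Num.sqrt (M%:R))^-1 *
                 expj (- (2 * pi / lambda) * (m%:R * d * cos beta))).

(* transmit steering vector a_T(theta, w) for antenna positions w *)
Definition aT (lambda : R) (N : nat) (theta : R) (w : 'I_N -> R) : 'cV[C]_N :=
  \col_(n < N) (rC (Num.sqrt (N%:R))^-1 *
                 expj (- (2 * pi / lambda) * (w n * cos theta))).

Definition AR (lambda d : R) (M L : nat) (beta : 'I_L -> R) : 'M[C]_(M, L) :=
  \matrix_(m < M, l < L) aR lambda d M (beta l) m 0.

Definition AT (lambda : R) (N L : nat) (theta : 'I_L -> R) (w : 'I_N -> R)
  : 'M[C]_(N, L) :=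
  \matrix_(n < N, l < L) aT lambda (theta l) w n 0.

Definition Gam (L : nat) (gamma : 'I_L -> C) : 'M[C]_L := diag_mx (\row_l gamma l).

Definition chan (lambda d : R) (M N L : nat) (gamma : 'I_L -> C)
  (beta theta : 'I_L -> R) (w : 'I_N -> R) : 'M[C]_(M, N) :=
  rC (Num.sqrt (M%:R * N%:R)) *:
    (AR lambda d M beta *m Gam gamma *m hermT (AT lambda theta w)).

Definition opt_value (S : R -> Prop) (v : R) : Prop :=
  S v /\ forall y, S y -> y <= v.

End Channel.

From mathcomp Require Import all_boot all_order all_algebra.
From mathcomp Require Import all_classical all_reals all_analysis.
From mathcomp Require Import complex ring.
Import GRing.Theory Num.Theory Order.TTheory.

Set Implicit Arguments. Unset Strict Implicit. Unset Printing Implicit Defensive.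
Local Open Scope ring_scope.

(** With a single path per user, in both problems user [u] contributes a
   nonnegative multiple [c_u a_u a_u^H] of one and the same rank-one matrix,
   where [a_u = a_R(beta_u)]: [c_u = M N_u |gamma_u|^2 a_T^H Q_u a_T] in the
   original problem and [c_u = M N_u |gamma_u|^2 Qt_u] in the relaxed one.  The
   power constraints give [c_u <= M N_u |gamma_u|^2 P_u], because
   [a_T^H Q a_T <= |a_T|^2 tr Q = tr Q] for [Q >= 0], and by the matrix
   determinant lemma [det (I + sum_u c_u a_u a_u^H)] is nondecreasing in each
   [c_u].  The bound is attained by the beamformer [Q_u = P_u a_T a_T^H] (for any
   distinct antenna positions) and by [Qt_u = P_u]. *)

Section ConjugateTranspose.
Variable R : realType.
Local Notation C := R[i].

Lemma hermTE m n (A : 'M[C]_(m, n)) i j : hermT A i j = (A j i)^*.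
Proof. by rewrite !mxE. Qed.

Lemma hermT_mul m n p (A : 'M[C]_(m, n)) (B : 'M[C]_(n, p)) :
  hermT (A *m B) = hermT B *m hermT A.
Proof. by rewrite /hermT map_mxM trmx_mul. Qed.

Lemma hermTK m n (A : 'M[C]_(m, n)) : hermT (hermT A) = A.
Proof.
rewrite /hermT map_trmx trmxK -map_mx_comp map_mx_id // => x.
by rewrite /= conjCK.
Qed.

Lemma hermTD m n (A B : 'M[C]_(m, n)) : hermT (A + B) = hermT A + hermT B.
Proof. by rewrite /hermT map_mxD linearD. Qed.

Lemma hermTB m n (A B : 'M[C]_(m, n)) : hermT (A - B) = hermT A - hermT B.
Proof. by rewrite /hermT map_mxB linearB. Qed.

Lemma hermTZ m n (c : C) (A : 'M[C]_(m, n)) : hermT (c *: A) = c^* *: hermT A.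
Proof. by rewrite /hermT map_mxZ linearZ. Qed.

Lemma hermT_scalar n (c : C) : hermT (c%:M : 'M[C]_n) = c^*%:M.
Proof. by rewrite /hermT map_scalar_mx tr_scalar_mx. Qed.

Lemma hermT1 n : hermT (1%:M : 'M[C]_n) = 1%:M.
Proof. by rewrite hermT_scalar conjC1. Qed.

Lemma hermT_delta n (i : 'I_n) :
  hermT (delta_mx i 0 : 'cV[C]_n) = delta_mx 0 i.
Proof. by apply/matrixP => k l; rewrite !mxE conjC_nat andbC. Qed.

Lemma outer_sandwich m n (c : C) (a : 'cV[C]_m) (t : 'cV[C]_n) (Q : 'M[C]_n) :
  (c *: (a *m hermT t)) *m Q *m hermT (c *: (a *m hermT t)) =
  (c^* * c * (hermT t *m Q *m t) 0 0) *: (a *m hermT a).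
Proof.
rewrite hermTZ hermT_mul hermTK -scalemxAr -!scalemxAl scalerA.
have -> : a *m hermT t *m Q *m (t *m hermT a) =
    a *m (hermT t *m Q *m t) *m hermT a.
  by rewrite !mulmxA.
by rewrite {1}[hermT t *m Q *m t]mx11_scalar mul_mx_scalar -scalemxAl scalerA.
Qed.

End ConjugateTranspose.

Section PositiveSemidefinite.
Variable R : realType.
Local Notation C := R[i].

Lemma mx11_mulmx (A B : 'M[C]_1) : (A *m B) 0 0 = A 0 0 * B 0 0.
Proof. by rewrite mxE big_ord1. Qed.

Lemma cnorm2_ge0 n (x : 'cV[C]_n) : 0 <= (hermT x *m x) 0 0.
Proof.
by rewrite mxE; apply: sumr_ge0 => i _; rewrite hermTE -normCKC exprn_ge0.
Qed.

Lemma psd_add n (A B : 'M[C]_n) : psd A -> psd B -> psd (A + B).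
Proof.
move=> [hA pA] [hB pB]; split; first by rewrite hermTD -hA -hB.
by move=> x; rewrite mulmxDr mulmxDl mxE addr_ge0.
Qed.

Lemma psd_scalar n (c : C) : 0 <= c -> psd (c%:M : 'M[C]_n).
Proof.
move=> c_ge0; split; first by rewrite hermT_scalar conj_Creal ?ger0_real.
by move=> x; rewrite mul_mx_scalar -scalemxAl mxE mulr_ge0 ?cnorm2_ge0.
Qed.

Lemma psd_outer n (c : C) (a : 'cV[C]_n) :
  0 <= c -> psd (c *: (a *m hermT a)).
Proof.
move=> c_ge0; split.
  by rewrite hermTZ hermT_mul hermTK conj_Creal ?ger0_real.
move=> x; rewrite -scalemxAr -scalemxAl mxE mulr_ge0 //.
rewrite mulmxA -[_ *m hermT a *m x]mulmxA mx11_mulmx.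
have -> : hermT x *m a = hermT (hermT a *m x) by rewrite hermT_mul hermTK.
by rewrite hermTE -normCKC exprn_ge0.
Qed.

Lemma qf_delta n (Q : 'M[C]_n) i j :
  hermT (delta_mx i 0 : 'cV[C]_n) *m Q *m delta_mx j 0 = (Q i j)%:M.
Proof. by rewrite hermT_delta -rowE -colE [LHS]mx11_scalar !mxE. Qed.

Lemma qf_sub_delta n (Q : 'M[C]_n) i j (a b : C) :
  let z : 'cV[C]_n := a *: delta_mx i 0 - b *: delta_mx j 0 in
  (hermT z *m Q *m z) 0 0 =
  a^* * a * Q i i - a^* * b * Q i j - b^* * a * Q j i + b^* * b * Q j j.
Proof.
rewrite /= hermTB !hermTZ !mulmxBl !mulmxBr -!scalemxAl -!scalemxAr !qf_delta.
by rewrite !mxE !eqxx !mulr1n; ring.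
Qed.

Lemma qfE n (Q : 'M[C]_n) (x : 'cV[C]_n) :
  (hermT x *m Q *m x) 0 0 = \sum_i \sum_j (x i 0)^* * Q i j * x j 0.
Proof.
rewrite mxE exchange_big; apply: eq_bigr => j _.
by rewrite mxE mulr_suml; apply: eq_bigr => i _; rewrite hermTE.
Qed.

(* Summing the forms of [conj (x j) e_i - conj (x i) e_j] over all [i, j] gives
   [2 (x^H x tr Q - x^H Q x)]. *)
Lemma qf_le_mxtrace n (Q : 'M[C]_n) (x : 'cV[C]_n) : psd Q ->
  (hermT x *m Q *m x) 0 0 <= (hermT x *m x) 0 0 * \tr Q.
Proof.
move=> [_ Q_ge0].
pose z i j : 'cV[C]_n := (x j 0)^* *: delta_mx i 0 - (x i 0)^* *: delta_mx j 0.
pose F i j := Q i i * ((x j 0)^* * x j 0).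
pose G i j := (x i 0)^* * Q i j * x j 0.
have qf_z i j : (hermT (z i j) *m Q *m z i j) 0 0 = F i j - G i j - G j i + F j i.
  by rewrite qf_sub_delta /F /G !conjCK; ring.
have sumF : \sum_i \sum_j F i j = \tr Q * (hermT x *m x) 0 0.
  rewrite mulr_suml; apply: eq_bigr => i _; rewrite mxE mulr_sumr.
  by apply: eq_bigr => j _; rewrite hermTE.
have sum_qf_z : \sum_i \sum_j (hermT (z i j) *m Q *m z i j) 0 0 =
    2 * ((hermT x *m x) 0 0 * \tr Q - (hermT x *m Q *m x) 0 0).
  under eq_bigr => i _ do under eq_bigr => j _ do rewrite qf_z.
  under eq_bigr => i _ do rewrite big_split /= !sumrB.
  rewrite big_split /= !sumrB [\sum_i \sum_j F j i]exchange_big.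
  rewrite [\sum_i \sum_j G j i]exchange_big qfE sumF; ring.
have : 0 <= \sum_i \sum_j (hermT (z i j) *m Q *m z i j) 0 0.
  by apply: sumr_ge0 => i _; apply: sumr_ge0 => j _; apply: Q_ge0.
by rewrite sum_qf_z pmulr_rge0 ?ltr0n // subr_ge0.
Qed.

End PositiveSemidefinite.

Section DeterminantMonotonicity.
Variable R : realType.
Local Notation C := R[i].

Lemma det1D_mul n (x : 'cV[C]_n) (y : 'rV[C]_n) :
  \det (1%:M + x *m y) = 1 + (y *m x) 0 0.
Proof.
have E1 : block_mx 1%:M (- x) y 1%:M =
    block_mx 1%:M (- x) 0 1%:M *m block_mx (1%:M + x *m y) 0 y 1%:M.
  by rewrite mulmx_block !mul1mx !mul0mx !mulmx1 !add0r mulNmx addrK.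
have E2 : block_mx 1%:M (- x) y 1%:M =
    block_mx 1%:M 0 y 1%:M *m block_mx 1%:M (- x) 0 (1%:M + y *m x).
  by rewrite mulmx_block !mul1mx !mul0mx !mulmx1 !addr0 mulmxN addrC addrK.
have := congr1 determinant (etrans (esym E1) E2).
rewrite !det_mulmx det_ublock det_lblock !det1 !mul1r mulr1 => ->.
by rewrite det_lblock det_ublock !det1 !mul1r det_mx11 !mxE.
Qed.

Definition posdef n (A : 'M[C]_n) := psd A /\ 0 < \det A.

Lemma posdef1 n : posdef (1%:M : 'M[C]_n).
Proof. by split; [apply: psd_scalar | rewrite det1]. Qed.

(* Matrix determinant lemma, with [q = a^H A^-1 a]. *)
Lemma det_posdefD_outer n (A : 'M[C]_n) (a : 'cV[C]_n) : posdef A ->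
  exists2 q, 0 <= q &
    forall c, \det (A + c *: (a *m hermT a)) = \det A * (1 + c * q).
Proof.
move=> [[hA A_ge0] detA_gt0].
have A_unit : A \in unitmx by rewrite unitmxE unitfE lt0r_neq0.
pose b := invmx A *m a.
have Ab : A *m b = a by rewrite /b mulmxA mulmxV // mul1mx.
exists ((hermT b *m A *m b) 0 0) => [|c]; first exact: A_ge0.
have -> : A + c *: (a *m hermT a) = A *m (1%:M + (c *: b) *m hermT a).
  by rewrite mulmxDr mulmx1 -scalemxAl -scalemxAr mulmxA Ab.
rewrite det_mulmx det1D_mul -scalemxAr mxE.
by rewrite -Ab hermT_mul -hA.
Qed.

Lemma posdefD_outer n (A : 'M[C]_n) (a : 'cV[C]_n) (c : C) :
  posdef A -> 0 <= c -> posdef (A + c *: (a *m hermT a)).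
Proof.
move=> posA c_ge0; have [q q_ge0 det_q] := det_posdefD_outer a posA.
split; first by apply: psd_add; [case: posA | exact: psd_outer].
rewrite det_q mulr_gt0 //; first by case: posA.
by rewrite (lt_le_trans ltr01) // lerDl mulr_ge0.
Qed.

Lemma posdefD_sum_outer n K (a : 'I_K -> 'cV[C]_n) (c : 'I_K -> C) (A : 'M[C]_n) :
  posdef A -> (forall k, 0 <= c k) ->
  posdef (A + \sum_k c k *: (a k *m hermT (a k))).
Proof.
elim: K a c A => [|K IH] a c A posA c_ge0; first by rewrite big_ord0 addr0.
by rewrite big_ord_recl addrA; apply: IH => //; apply: posdefD_outer.
Qed.

Lemma ler_det_posdefD_sum_outer n K (a : 'I_K -> 'cV[C]_n) (c c' : 'I_K -> C)
    (A : 'M[C]_n) :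
  posdef A -> (forall k, 0 <= c k <= c' k) ->
  \det (A + \sum_k c k *: (a k *m hermT (a k))) <=
  \det (A + \sum_k c' k *: (a k *m hermT (a k))).
Proof.
elim: K a c c' A => [|K IH] a c c' A posA cc'; first by rewrite !big_ord0.
have c_ge0 k : 0 <= c k by case/andP: (cc' k).
have c'_ge0 k : 0 <= c' k by case/andP: (cc' k) => /le_trans; apply.
rewrite !big_ord_recl !addrA.
have posA0 := posdefD_outer (a ord0) posA (c_ge0 ord0).
apply: le_trans (IH _ _ _ _ posA0 (fun k => cc' _)) _.
rewrite ![A + _ + \sum_i _]addrAC.
have posB := posdefD_sum_outer (fun k => a (lift ord0 k))
  (c := fun k => c' (lift ord0 k)) posA (fun k => c'_ge0 _).
have [q q_ge0 det_q] := det_posdefD_outer (a ord0) posB.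
rewrite !det_q; apply: ler_wpM2l; first by case: posB => _ /ltW.
by rewrite lerD2l ler_wpM2r //; case/andP: (cc' ord0).
Qed.

Definition logdet_outer n K (a : 'I_K -> 'cV[C]_n) (c : 'I_K -> C) : R :=
  logdet (\sum_k c k *: (a k *m hermT (a k)) + 1%:M).

Lemma ler_logdet_outer n K (a : 'I_K -> 'cV[C]_n) (c c' : 'I_K -> C) :
  (forall k, 0 <= c k <= c' k) -> logdet_outer a c <= logdet_outer a c'.
Proof.
move=> cc'; have c_ge0 k : 0 <= c k by case/andP: (cc' k).
rewrite /logdet_outer /logdet ![_ + 1%:M]addrC.
have [_] := posdefD_sum_outer a (posdef1 n) c_ge0.
have := ler_det_posdefD_sum_outer a (posdef1 n) cc'.
rewrite ltcE lecE => /andP[_ det_le] /andP[_ det_gt0].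
by rewrite ler_ln ?posrE // (lt_le_trans det_gt0).
Qed.

Lemma logdet_sum_outerE n K (a : 'I_K -> 'cV[C]_n) (c : 'I_K -> C)
    (F : 'I_K -> 'M[C]_n) :
  (forall k, F k = c k *: (a k *m hermT (a k))) ->
  logdet (\sum_k F k + 1%:M) = logdet_outer a c.
Proof. by move=> FE; rewrite /logdet_outer; under eq_bigr do rewrite FE. Qed.

Lemma opt_value_logdet_outer (S : R -> Prop) n K (a : 'I_K -> 'cV[C]_n)
    (g p : 'I_K -> C) :
  (forall k, 0 <= g k) ->
  S (logdet_outer a (fun k => g k * p k)) ->
  (forall y, S y -> exists2 x, (forall k, 0 <= x k <= p k) &
     y = logdet_outer a (fun k => g k * x k)) ->
  opt_value S (logdet_outer a (fun k => g k * p k)).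
Proof.
move=> g_ge0 Smax Sle; split=> // y /Sle[x x_bounds ->].
apply: ler_logdet_outer => k; case/andP: (x_bounds k) => x_ge0 x_le.
by rewrite mulr_ge0 ?ler_wpM2l.
Qed.

End DeterminantMonotonicity.

Section SteeringVectors.
Variable R : realType.
Local Notation C := R[i].
Variable lambda : R.

Lemma conjC_rC (r : R) : (rC r)^* = rC r.
Proof. exact: conjc_real. Qed.

Lemma mul_conj_expj (t : R) : (expj t)^* * expj t = 1.
Proof.
apply/eqP; rewrite eq_complex /= mulNr opprK -!expr2 cos2Dsin2 eqxx /=.
by rewrite mulNr mulrC addrN.
Qed.

Lemma cnorm2_aT N th (w : 'I_N -> R) : (0 < N)%N ->
  (hermT (aT lambda th w) *m aT lambda th w) 0 0 = 1.
Proof.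
move=> N_gt0; have N_ge0 : (0 : R) <= N%:R by rewrite ler0n.
have entry n : (aT lambda th w n 0)^* * aT lambda th w n 0 = rC (N%:R)^-1.
  rewrite mxE -normCKC normrM exprMn !normCKC conjC_rC mul_conj_expj mulr1.
  by rewrite /rC -rmorphM /= -invfM -expr2 sqr_sqrtr.
rewrite mxE; under eq_bigr => n _ do rewrite hermTE entry.
rewrite sumr_const card_ord -rmorphMn /= -[_ *+ N]mulr_natr.
by rewrite mulVf ?pnatr_eq0 -?lt0n.
Qed.

Lemma qf_aT_bounds N th (w : 'I_N -> R) (Q : 'M[C]_N) (P : R) : (0 < N)%N ->
  psd Q -> \tr Q <= rC P ->
  0 <= (hermT (aT lambda th w) *m Q *m aT lambda th w) 0 0 <= rC P.
Proof.
move=> N_gt0 psdQ trQ; have [_ Q_ge0] := psdQ; rewrite Q_ge0 /=.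
by apply: le_trans (qf_le_mxtrace _ psdQ) _; rewrite cnorm2_aT // mul1r.
Qed.

End SteeringVectors.

Section Beamforming.
Variable R : realType.
Local Notation C := R[i].

Definition beamformer (P : R) n (t : 'cV[C]_n) : 'M[C]_n :=
  rC P *: (t *m hermT t).

Lemma beamformer_feasible (P : R) n (t : 'cV[C]_n) :
  0 <= P -> (hermT t *m t) 0 0 = 1 ->
  psd (beamformer P t) /\ \tr (beamformer P t) <= rC P.
Proof.
move=> P_ge0 t_unit; split; first by apply: psd_outer; rewrite /rC lecR.
by rewrite mxtraceZ mxtrace_mulC /mxtrace big_ord1 t_unit mulr1.
Qed.

Lemma qf_beamformer (P : R) n (t : 'cV[C]_n) : (hermT t *m t) 0 0 = 1 ->
  (hermT t *m beamformer P t *m t) 0 0 = rC P.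
Proof.
move=> t_unit; have t1 : hermT t *m t = 1%:M by rewrite [LHS]mx11_scalar t_unit.
by rewrite -scalemxAr -scalemxAl mulmxA t1 mul1mx t1 mxE mxE mulr1.
Qed.

Lemma scalar_feasible (P : R) L : 0 <= P ->
  psd ((rC P)%:M : 'M[C]_L) /\ \tr ((rC P)%:M : 'M[C]_L) <= rC (L%:R * P).
Proof.
move=> P_ge0; split; first by apply: psd_scalar; rewrite lecR.
by rewrite mxtrace_scalar /rC rmorphM rmorph_nat mulr_natl.
Qed.

Definition equispaced N (W : R) (n : 'I_N) : R := W * (n%:R / N%:R).

Lemma equispaced_bounds N (W : R) (n : 'I_N) : 0 <= W -> 0 <= equispaced W n <= W.
Proof.
move=> W_ge0; have N_gt0 : (0 < N)%N by apply: leq_ltn_trans (ltn_ord n).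
rewrite mulr_ge0 ?divr_ge0 ?ler0n //= ler_piMr //.
by rewrite ler_pdivrMr ?ltr0n // mul1r ler_nat ltnW.
Qed.

Lemma equispaced_inj N (W : R) : 0 < W -> injective (@equispaced N W).
Proof.
move=> W_gt0 n m /(mulfI (lt0r_neq0 W_gt0)).
have N_neq0 : N%:R != 0 :> R.
  by rewrite pnatr_eq0 -lt0n (leq_ltn_trans _ (ltn_ord n)).
move/(mulIf (invr_neq0 N_neq0))/eqP.
by rewrite eqr_nat => /eqP/val_inj.
Qed.

End Beamforming.

Section SinglePath.
Variable R : realType.
Local Notation C := R[i].
Variables (lambda d : R) (M : nat).

Lemma AR_path1 (beta : 'I_1 -> R) :
  AR lambda d M beta = aR lambda d M (beta ord0).
Proof. by apply/matrixP => i j; rewrite !mxE (ord1 j). Qed.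

Lemma AT_path1 N (theta : 'I_1 -> R) (w : 'I_N -> R) :
  AT lambda theta w = aT lambda (theta ord0) w.
Proof. by apply/matrixP => i j; rewrite !mxE (ord1 j). Qed.

Lemma Gam_path1 (gamma : 'I_1 -> C) : Gam gamma = (gamma ord0)%:M.
Proof. by apply/matrixP => i j; rewrite (ord1 i) (ord1 j) !mxE. Qed.

Lemma chan_sandwich_path1 L (HL : L = 1%N) N (gamma : 'I_L -> C)
    (beta theta : 'I_L -> R) (w : 'I_N -> R) (Q : 'M[C]_N) :
  let l := cast_ord (esym HL) ord0 in
  let G := chan lambda d M gamma beta theta w in
  G *m Q *m hermT G =
  (rC (M%:R * N%:R) * `|gamma l| ^+ 2 *
     (hermT (aT lambda (theta l) w) *m Q *m aT lambda (theta l) w) 0 0)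
  *: (aR lambda d M (beta l) *m hermT (aR lambda d M (beta l))).
Proof.
subst L; rewrite /= (_ : cast_ord _ _ = ord0); last exact: val_inj.
rewrite /chan AR_path1 AT_path1 Gam_path1 mul_mx_scalar.
rewrite -[(_ *: _) *m hermT _]scalemxAl scalerA.
rewrite outer_sandwich -normCKC normrM exprMn ger0_norm ?lecR ?sqrtr_ge0 //.
by rewrite /rC -rmorphXn sqr_sqrtr ?mulr_ge0 ?ler0n.
Qed.

Lemma AR_sandwich_path1 L (HL : L = 1%N) (K : R) (gamma : 'I_L -> C)
    (beta : 'I_L -> R) (Qt : 'M[C]_L) :
  let l := cast_ord (esym HL) ord0 in
  rC K *: (AR lambda d M beta *m Gam gamma *m Qt *m hermT (Gam gamma) *m
            hermT (AR lambda d M beta)) =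
  (rC K * `|gamma l| ^+ 2 * Qt l l)
  *: (aR lambda d M (beta l) *m hermT (aR lambda d M (beta l))).
Proof.
subst L; rewrite /= (_ : cast_ord _ _ = ord0); last exact: val_inj.
rewrite AR_path1 Gam_path1 hermT_scalar {1}(mx11_scalar Qt) !mul_mx_scalar.
by rewrite -!scalemxAl !scalerA normCK; congr (_ *: _); ring.
Qed.

Lemma psd_entry_path1 L (HL : L = 1%N) (P : R) (Qt : 'M[C]_L) :
  let l := cast_ord (esym HL) ord0 in
  psd Qt -> \tr Qt <= rC (L%:R * P) -> 0 <= Qt l l <= rC P.
Proof.
subst L; rewrite /= (_ : cast_ord _ _ = ord0); last exact: val_inj.
move=> [_ Qt_ge0]; rewrite /mxtrace big_ord1 mul1r => ->; rewrite andbT.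
by have := Qt_ge0 1%:M; rewrite hermT1 mulmx1 mul1mx.
Qed.

End SinglePath.

Local Open Scope complex_scope.

Theorem lemma2 (R : realType) (lambda : R) (M U : nat)
  (N : 'I_U -> nat) (W P : 'I_U -> R)
  (L : 'I_U -> nat)
  (gamma : forall u, 'I_(L u) -> R[i]) (beta theta : forall u, 'I_(L u) -> R) :
  0 < lambda -> (0 < M)%N -> (forall u, 0 < N u)%N ->
  (forall u, 0 < W u) -> (forall u, 0 < P u) ->
  (forall u l, 0 <= beta u l <= pi) -> (forall u l, 0 <= theta u l <= pi) ->
  forall HL : (forall u, L u = 1%N),
  let d := lambda / 2 in
  let G u w := chan lambda d M (gamma u) (beta u) (theta u) w in
  let Cstar := opt_value (fun c => exists (Q : forall u, 'M[R[i]]_(N u))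
                                     (w : forall u, 'I_(N u) -> R),
      (forall u, psd (Q u) /\ \tr (Q u) <= rC (P u)) /\
      (forall u n, 0 <= w u n <= W u) /\
      (forall u, injective (w u)) /\
      c = logdet ((\sum_(u < U) (G u (w u) *m Q u *m hermT (G u (w u)))) + 1%:M)) in
  let Cub := opt_value (fun c => exists (Qt : forall u, 'M[R[i]]_(L u)),
      (forall u, psd (Qt u) /\ \tr (Qt u) <= rC ((L u)%:R * P u)) /\
      c = logdet (\sum_(u < U)
             (rC (M%:R * (N u)%:R) *: (AR lambda d M (beta u) *m Gam (gamma u)
                 *m Qt u *m hermT (Gam (gamma u)) *m hermT (AR lambda d M (beta u))))
             + 1%:M)) in
  let v := logdet (\sum_(u < U)
      (rC (M%:R * (N u)%:R * P u) * `|gamma u (cast_ord (esym (HL u)) ord0)| ^+ 2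
        *: (aR lambda d M (beta u (cast_ord (esym (HL u)) ord0))
             *m hermT (aR lambda d M (beta u (cast_ord (esym (HL u)) ord0))))) + 1%:M) in
  Cstar v /\ Cub v.
Proof.
move=> _ _ N_gt0 W_gt0 P_gt0 _ _ HL d G Cstar Cub v.
pose l u := cast_ord (esym (HL u)) ord0.
pose a u := aR lambda d M (beta u (l u)).
pose K u := rC (M%:R * (N u)%:R) * `|gamma u (l u)| ^+ 2.
have K_ge0 u : 0 <= K u by rewrite mulr_ge0 ?exprn_ge0 // lecR mulr_ge0 ?ler0n.
have -> : v = logdet_outer a (fun u => K u * rC (P u)).
  apply: logdet_sum_outerE => u.
  by rewrite /K /rC !rmorphM /=; congr (_ *: _); ring.
split; apply: opt_value_logdet_outer => //.
- pose w u := @equispaced _ (N u) (W u).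
  pose t u := aT lambda (theta u (l u)) (w u).
  exists (fun u => beamformer (P u) (t u)), w.
  split; [|split; [|split]] => [u|u n|u|].
  + by apply: beamformer_feasible; rewrite ?cnorm2_aT ?ltW.
  + exact/equispaced_bounds/ltW.
  + exact: equispaced_inj.
  + apply/esym/logdet_sum_outerE => u.
    by rewrite /G chan_sandwich_path1 qf_beamformer ?cnorm2_aT.
- move=> _ [Q [w [Q_feas [_ [_ ->]]]]].
  exists (fun u => (hermT (aT lambda (theta u (l u)) (w u)) *m Q u *m
                    aT lambda (theta u (l u)) (w u)) 0 0).
    by move=> u; apply: qf_aT_bounds; case: (Q_feas u).
  by apply: logdet_sum_outerE => u; rewrite /G chan_sandwich_path1.
- exists (fun u => (rC (P u))%:M); split => [u|]; first exact/scalar_feasible/ltW.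
  apply/esym/logdet_sum_outerE => u.
  by rewrite AR_sandwich_path1 mxE eqxx mulr1n.
- move=> _ [Qt [Qt_feas ->]]; exists (fun u => Qt u (l u) (l u)).
    by move=> u; apply: psd_entry_path1; case: (Qt_feas u).
  by apply: logdet_sum_outerE => u; rewrite AR_sandwich_path1.
Qed.
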